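(* Assume $\sum_{i=1}^M b_i\ge1$ and let $\mathbf r^\star(\epsilon)$ be the energy-adequate solution. Then $\lim_{\epsilon\to0^+}|\bar\Delta(\mathbf r^\star(\epsilon))-\bar\Delta_{\mathrm{opt}}(\epsilon)|=0$, and $$\lim_{\epsilon\to0^+}\bar\Delta_{\mathrm{opt}}(\epsilon)=\sum_{i=1}^M\Big[\frac{w_i}{\min\{b_i,\beta^\star\sqrt{w_i}\}}+w_i\Big].$$
   Context: Fix an integer $M\ge1$, weights $w_1,\dots,w_M>0$, constants $b_1,\dots,b_M>0$, and $\epsilon>0$. For $\mathbf r\in(0,\infty)^M$ write $S(\mathbf r)=\sum_{i=1}^M r_i$ and define $$\bar\Delta(\mathbf r)=\sum_{l=1}^M \frac{w_l e^{-r_l\epsilon}}{r_l}\, e^{\epsilon S(\mathbf r)}\big(1+S(\mathbf r)\big)+\sum_{l=1}^M w_l,\qquad \sigma_l(\mathbf r)=\frac{(1-e^{-r_l\epsilon})S(\mathbf r)+r_le^{-r_l\epsilon}}{S(\mathbf r)+1}.$$ Problem 1: minimize $\bar\Delta(\mathbf r)$ over $\mathbf r\in(0,\infty)^M$ subject to $\sigma_l(\mathbf r)\le b_l$ for all $l$; its optimal (infimum) value is $\bar\Delta_{\mathrm{opt}}(\epsilon)$. Energy-adequate solution (when $\sum_i b_i\ge1$): let $\beta^\star\in[0,\max_l b_l/\sqrt{w_l}]$ be the root of $\sum_{i=1}^M\min\{b_i,\beta^\star\sqrt{w_i}\}=1$, let $x^\star=-\tfrac12+\sqrt{\tfrac14+\tfrac1\epsilon}$,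 and set $r^\star_l=\min\{b_l,\beta^\star\sqrt{w_l}\}\,x^\star$. *)

From Stdlib Require Import Reals Lra.
Open Scope R_scope.

(* Indices 1..M of the paper are 0..M-1 here. *)
Fixpoint sumR (n : nat) (f : nat -> R) : R :=
  match n with
  | O => 0
  | S k => sumR k f + f k
  end.

Definition Ssum (M : nat) (r : nat -> R) : R := sumR M r.

Definition DeltaBar (M : nat) (w : nat -> R) (eps : R) (r : nat -> R) : R :=
  sumR M (fun l => w l * exp (- (r l * eps)) / r l)
    * exp (eps * Ssum M r) * (1 + Ssum M r)
  + sumR M w.

Definition sigma (M : nat) (eps : R) (r : nat -> R) (l : nat) : R :=
  ((1 - exp (- (r l * eps))) * Ssum M r + r l * exp (- (r l * eps)))
    / (Ssum M r + 1).

Definition feasible (M : nat) (b : nat -> R) (eps : R) (r : nat -> R) : Prop :=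
  (forall i, (i < M)%nat -> 0 < r i) /\
  (forall l, (l < M)%nat -> sigma M eps r l <= b l).

Definition objective_values (M : nat) (w b : nat -> R) (eps : R) : R -> Prop :=
  fun v => exists r, feasible M b eps r /\ v = DeltaBar M w eps r.

Definition xstar (eps : R) : R := - / 2 + sqrt (/ 4 + / eps).

Definition rstar (w b : nat -> R) (beta eps : R) (l : nat) : R :=
  Rmin (b l) (beta * sqrt (w l)) * xstar eps.

Definition is_inf (E : R -> Prop) (m : R) : Prop :=
  (forall x, E x -> m <= x) /\ (forall m', (forall x, E x -> m' <= x) -> m' <= m).

(* Writing y_l = r_l / (1 + S(r)), every feasible r has y_l <= b_l and sum y_l <= 1, and
   the objective is at least sum_l w_l / y_l + sum_l w_l.  The convex function
   sum_l w_l / y_l lies above its tangent at y = c with c_l = min(b_l, beta sqrt w_l),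
   and because sum_l c_l = 1 the tangent gives the lower bound
   sum_l (w_l / c_l + w_l) for Delta_opt(eps).  The energy-adequate point r = c x* is
   feasible and its objective exceeds this bound by at most a quantity that depends
   only on eps x* <= sqrt eps, hence vanishes as eps -> 0+; squeezing Delta_opt between
   the two gives both limits. *)
From Pilot Require Import Defs.
From Stdlib Require Import Reals Lra Lia.
Open Scope R_scope.

Lemma sumR_ext n f g : (forall i, (i < n)%nat -> f i = g i) -> sumR n f = sumR n g.
Proof.
  induction n as [|n IH]; intros H; simpl; [reflexivity|].
  rewrite IH by (intros; apply H; lia). rewrite H by lia. reflexivity.
Qed.

Lemma sumR_le n f g : (forall i, (i < n)%nat -> f i <= g i) -> sumR n f <= sumR n g.
Proof.
  induction n as [|n IH]; intros H; simpl; [lra|].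
  apply Rplus_le_compat; [apply IH; intros; apply H|apply H]; lia.
Qed.

Lemma sumR_plus n f g : sumR n (fun i => f i + g i) = sumR n f + sumR n g.
Proof. induction n as [|n IH]; simpl; [ring|]. rewrite IH; ring. Qed.

Lemma sumR_minus n f g : sumR n (fun i => f i - g i) = sumR n f - sumR n g.
Proof. induction n as [|n IH]; simpl; [ring|]. rewrite IH; ring. Qed.

Lemma sumR_mult_r n f k : sumR n (fun i => f i * k) = sumR n f * k.
Proof. induction n as [|n IH]; simpl; [ring|]. rewrite IH; ring. Qed.

Lemma sumR_nonneg n f : (forall i, (i < n)%nat -> 0 <= f i) -> 0 <= sumR n f.
Proof.
  induction n as [|n IH]; intros H; simpl; [lra|].
  apply Rplus_le_le_0_compat; [apply IH; intros; apply H|apply H]; lia.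
Qed.

Lemma sumR_term_le n f l :
  (forall i, (i < n)%nat -> 0 <= f i) -> (l < n)%nat -> f l <= sumR n f.
Proof.
  induction n as [|n IH]; intros H Hl; simpl; [lia|].
  destruct (Nat.eq_dec l n) as [->|Hne].
  - assert (0 <= sumR n f) by (apply sumR_nonneg; intros; apply H; lia). lra.
  - assert (f l <= sumR n f) by (apply IH; [intros; apply H|]; lia).
    assert (0 <= f n) by (apply H; lia). lra.
Qed.

Lemma exp_le_compat a b : a <= b -> exp a <= exp b.
Proof.
  intros [Hlt | ->]; [left; apply exp_increasing; exact Hlt|right; reflexivity].
Qed.

Lemma exp_le_1 a : a <= 0 -> exp a <= 1.
Proof. intros H; rewrite <- exp_0; apply exp_le_compat, H. Qed.

Lemma limit1_in_squeeze f g D l x0 :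
  limit1_in g D 0 x0 -> (forall x, D x -> Rabs (f x - l) <= g x) -> limit1_in f D l x0.
Proof.
  intros Hg Hfg e He. destruct (Hg e He) as [alp [Halp Hclose]].
  exists alp; split; [exact Halp|]. intros x [Dx Hx].
  specialize (Hclose x (conj Dx Hx)). specialize (Hfg x Dx).
  simpl in *; unfold R_dist in *. rewrite Rminus_0_r in Hclose.
  pose proof (Rle_abs (g x)). lra.
Qed.

Lemma limit1_in_continuity_pt_0 g :
  continuity_pt g 0 -> g 0 = 0 -> limit1_in g (fun e => 0 < e) 0 0.
Proof.
  intros Hg Hg0.
  assert (Hlim : limit1_in g (D_x no_cond 0) (g 0) 0) by exact Hg.
  rewrite Hg0 in Hlim.
  apply limit1_imp with (D := D_x no_cond 0); [|exact Hlim].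
  intros e He; split; [exact I|lra].
Qed.

Lemma continuity_pt_gap K :
  continuity_pt (fun e => K * (exp (sqrt e) * (1 + sqrt e + e) - 1)) 0.
Proof.
  assert (Hsqrt : continuity_pt sqrt 0) by (apply continuity_pt_sqrt; lra).
  assert (Hexp : continuity_pt (fun e => exp (sqrt e)) 0).
  { apply (continuity_pt_comp sqrt exp); [exact Hsqrt|].
    apply derivable_continuous_pt, derivable_pt_exp. }
  assert (Hid : continuity_pt (fun e => e) 0) by (apply derivable_continuous_pt; reg).
  assert (Hconst : forall k, continuity_pt (fun _ => k) 0)
    by (intros; apply continuity_pt_const; intros ? ?; reflexivity).
  apply (continuity_pt_mult (fun _ => K)); [apply Hconst|].
  apply (continuity_pt_minus _ (fun _ => 1)); [|apply Hconst].
  apply (continuity_pt_mult (fun e => exp (sqrt e))); [exact Hexp|].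
  apply (continuity_pt_plus (fun e => 1 + sqrt e)); [|exact Hid].
  apply (continuity_pt_plus (fun _ => 1)); [apply Hconst|exact Hsqrt].
Qed.

Lemma gap_vanishes K :
  limit1_in (fun e => K * (exp (sqrt e) * (1 + sqrt e + e) - 1)) (fun e => 0 < e) 0 0.
Proof.
  apply limit1_in_continuity_pt_0; [apply continuity_pt_gap|].
  rewrite sqrt_0, exp_0; ring.
Qed.

Lemma div_ge_tangent w c y :
  0 <= w -> 0 < c -> 0 < y -> w / c + w / (c * c) * (c - y) <= w / y.
Proof.
  intros Hw Hc Hy.
  assert (Hgap : w / y - (w / c + w / (c * c) * (c - y))
                 = w * ((c - y) * (c - y)) / (y * c * c)) by (field; lra).
  assert (0 <= w * ((c - y) * (c - y)) / (y * c * c)).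
  { apply Rmult_le_pos; [apply Rmult_le_pos; [lra|apply Rle_0_sqr]|].
    left; apply Rinv_0_lt_compat, Rmult_lt_0_compat; [|lra].
    apply Rmult_lt_0_compat; lra. }
  lra.
Qed.

Definition cstar (w b : nat -> R) (beta : R) (i : nat) : R := Rmin (b i) (beta * sqrt (w i)).

(* The tangent of w / y at the capped point c = min(b, beta sqrt w) has slope at least
   1 / beta^2 on the whole feasible range y <= b, with equality when the cap is inactive. *)
Lemma cstar_tangent w b beta y :
  0 < w -> 0 < beta -> 0 < y -> y <= b ->
  w / Rmin b (beta * sqrt w) + (Rmin b (beta * sqrt w) - y) / (beta * beta) <= w / y.
Proof.
  intros Hw Hbeta Hy Hyb.
  assert (Hs : 0 < sqrt w) by (apply sqrt_lt_R0, Hw).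
  assert (Hss : sqrt w * sqrt w = w) by (apply sqrt_sqrt; lra).
  assert (Hslope : (Rmin b (beta * sqrt w) - y) / (beta * beta)
                   <= w / (Rmin b (beta * sqrt w) * Rmin b (beta * sqrt w))
                      * (Rmin b (beta * sqrt w) - y)).
  { apply Rmin_case_strong; intros Hmin.
    - assert (Hbb : b * b <= w * (beta * beta)).
      { rewrite <- Hss. assert (b * b <= (beta * sqrt w) * (beta * sqrt w))
          by (apply Rmult_le_compat; lra). nra. }
      assert (Hb0 : 0 < b) by lra.
      replace (w / (b * b) * (b - y)) with ((b - y) * (w * (beta * beta) / (b * b)) / (beta * beta))
        by (field; lra).
      apply Rmult_le_compat_r; [left; apply Rinv_0_lt_compat; nra|].
      rewrite <- (Rmult_1_r (b - y)) at 1.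
      apply Rmult_le_compat_l; [lra|].
      apply Rmult_le_reg_r with (b * b); [nra|].
      unfold Rdiv; rewrite Rmult_assoc, Rinv_l by nra. lra.
    - right.
      replace (beta * sqrt w * (beta * sqrt w)) with (w * (beta * beta))
        by (rewrite <- Hss at 1; ring).
      field. lra. }
  pose proof (div_ge_tangent w (Rmin b (beta * sqrt w)) y).
  assert (0 < Rmin b (beta * sqrt w)) by (apply Rmin_glb_lt; nra).
  lra.
Qed.

Lemma share_le_sigma M eps r l :
  0 <= eps -> (forall i, (i < M)%nat -> 0 < r i) -> (l < M)%nat ->
  r l / (Ssum M r + 1) <= Defs.sigma M eps r l.
Proof.
  intros Heps Hr Hl. unfold Defs.sigma.
  assert (Hrl := Hr l Hl).
  assert (HrS : r l <= Ssum M r) by (apply sumR_term_le; [intros; left; apply Hr|]; auto).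
  assert (HE : exp (- (r l * eps)) <= 1) by (apply exp_le_1; nra).
  apply Rmult_le_compat_r; [left; apply Rinv_0_lt_compat; lra|].
  nra.
Qed.

Lemma sum_div_shares_le_DeltaBar M w eps r :
  0 <= eps -> (forall i, (i < M)%nat -> 0 <= w i) -> (forall i, (i < M)%nat -> 0 < r i) ->
  sumR M (fun l => w l / (r l / (Ssum M r + 1))) + sumR M w <= DeltaBar M w eps r.
Proof.
  intros Heps Hw Hr. unfold DeltaBar.
  apply Rplus_le_compat_r. rewrite Rmult_assoc, <- sumR_mult_r.
  apply sumR_le; intros l Hl.
  assert (Hrl := Hr l Hl).
  assert (HS : r l <= Ssum M r) by (apply sumR_term_le; [intros; left; apply Hr|]; auto).
  assert (Hexp : 1 <= exp (- (r l * eps)) * exp (eps * Ssum M r)).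
  { rewrite <- exp_plus, <- exp_0. apply exp_le_compat. nra. }
  replace (w l / (r l / (Ssum M r + 1))) with (w l * (Ssum M r + 1) / r l * 1) by (field; lra).
  replace (w l * exp (- (r l * eps)) / r l * (exp (eps * Ssum M r) * (1 + Ssum M r)))
    with (w l * (Ssum M r + 1) / r l * (exp (- (r l * eps)) * exp (eps * Ssum M r)))
    by (field; lra).
  apply Rmult_le_compat_l; [|exact Hexp].
  apply Rmult_le_pos; [apply Rmult_le_pos; [apply Hw; exact Hl|lra]|].
  left; apply Rinv_0_lt_compat, Hrl.
Qed.

Lemma xstar_pos eps : 0 < eps -> 0 < xstar eps.
Proof.
  intros Heps. unfold xstar.
  assert (/ 2 < sqrt (/ 4 + / eps)); [|lra].
  rewrite <- (sqrt_square (/ 2)) by lra.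
  apply sqrt_lt_1_alt. split; [nra|].
  assert (0 < / eps) by (apply Rinv_0_lt_compat, Heps). lra.
Qed.

Lemma xstar_root eps : 0 < eps -> eps * (xstar eps * (xstar eps + 1)) = 1.
Proof.
  intros Heps. unfold xstar.
  assert (0 < / eps) by (apply Rinv_0_lt_compat, Heps).
  assert (Hs : sqrt (/ 4 + / eps) * sqrt (/ 4 + / eps) = / 4 + / eps)
    by (apply sqrt_sqrt; lra).
  replace (eps * ((- / 2 + sqrt (/ 4 + / eps)) * (- / 2 + sqrt (/ 4 + / eps) + 1)))
    with (eps * (sqrt (/ 4 + / eps) * sqrt (/ 4 + / eps) - / 4)) by field.
  rewrite Hs. field. lra.
Qed.

(* From eps x (x + 1) = 1 we get eps x^2 <= 1, i.e. (eps x)^2 <= eps. *)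
Lemma eps_xstar_le_sqrt eps : 0 < eps -> eps * xstar eps <= sqrt eps.
Proof.
  intros Heps. pose proof (xstar_pos eps Heps). pose proof (xstar_root eps Heps).
  rewrite <- (sqrt_square (eps * xstar eps)) by nra.
  apply sqrt_le_1_alt. nra.
Qed.

Lemma beta_pos_of_cstar_sum M w b beta :
  (forall i, (i < M)%nat -> 0 < b i) -> 0 <= beta -> sumR M (cstar w b beta) = 1 -> 0 < beta.
Proof.
  intros Hb [Hpos | <-] Hsum; [exact Hpos|]. exfalso.
  assert (Hzero : sumR M (cstar w b 0) = sumR M (fun _ => 0)).
  { apply sumR_ext; intros i Hi. unfold cstar. rewrite Rmult_0_l.
    apply Rmin_right. specialize (Hb i Hi). lra. }
  assert (sumR M (fun _ => 0) = 0) by (clear; induction M; simpl; [|rewrite IHM]; ring).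
  lra.
Qed.

Section EnergyAdequate.

Variables (M : nat) (w b : nat -> R) (beta : R).
Hypothesis Hw : forall i, (i < M)%nat -> 0 < w i.
Hypothesis Hb : forall i, (i < M)%nat -> 0 < b i.
Hypothesis Hbeta_pos : 0 < beta.
Hypothesis Hcstar_sum : sumR M (cstar w b beta) = 1.

Local Notation c := (cstar w b beta).

Lemma cstar_pos i : (i < M)%nat -> 0 < c i.
Proof.
  intros Hi. unfold cstar. apply Rmin_glb_lt; [apply Hb, Hi|].
  apply Rmult_lt_0_compat; [exact Hbeta_pos|apply sqrt_lt_R0, Hw, Hi].
Qed.

Lemma sum_div_cstar_le y :
  (forall l, (l < M)%nat -> 0 < y l <= b l) -> sumR M y <= 1 ->
  sumR M (fun l => w l / c l) <= sumR M (fun l => w l / y l).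
Proof.
  intros Hy Hsum.
  assert (Htangent : sumR M (fun l => w l / c l + (c l - y l) * / (beta * beta))
                     <= sumR M (fun l => w l / y l)).
  { apply sumR_le; intros l Hl. destruct (Hy l Hl). apply cstar_tangent; auto. }
  rewrite sumR_plus, sumR_mult_r, sumR_minus, Hcstar_sum in Htangent.
  assert (0 <= (1 - sumR M y) * / (beta * beta))
    by (apply Rmult_le_pos; [lra|left; apply Rinv_0_lt_compat; nra]).
  lra.
Qed.

Lemma DeltaBar_feasible_ge eps r :
  0 < eps -> feasible M b eps r ->
  sumR M (fun l => w l / c l) + sumR M w <= DeltaBar M w eps r.
Proof.
  intros Heps [Hr Hsigma].
  assert (HS : 0 <= Ssum M r) by (apply sumR_nonneg; intros; left; apply Hr; auto).
  eapply Rle_trans;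
    [|apply sum_div_shares_le_DeltaBar; [lra|intros i Hi; left; apply Hw, Hi|exact Hr]].
  apply Rplus_le_compat_r, sum_div_cstar_le.
  - intros l Hl. split.
    + apply Rdiv_lt_0_compat; [apply Hr, Hl|lra].
    + apply Rle_trans with (Defs.sigma M eps r l); [|apply Hsigma, Hl].
      apply share_le_sigma; [lra|exact Hr|exact Hl].
  - unfold Rdiv. rewrite sumR_mult_r.
    apply Rmult_le_reg_r with (Ssum M r + 1); [lra|].
    rewrite Rmult_assoc, Rinv_l by lra. unfold Ssum in *. lra.
Qed.

Lemma Ssum_rstar eps : Ssum M (rstar w b beta eps) = xstar eps.
Proof.
  unfold Ssum, rstar. rewrite (sumR_mult_r M c), Hcstar_sum. ring.
Qed.

Lemma rstar_feasible eps : 0 < eps -> feasible M b eps (rstar w b beta eps).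
Proof.
  intros Heps. pose proof (xstar_pos eps Heps) as Hx. pose proof (xstar_root eps Heps).
  split.
  - intros i Hi. apply Rmult_lt_0_compat; [apply cstar_pos, Hi|exact Hx].
  - intros l Hl. unfold Defs.sigma. rewrite Ssum_rstar. unfold rstar.
    change (Rmin (b l) (beta * sqrt (w l))) with (c l).
    assert (Hc := cstar_pos l Hl).
    assert (Hcb : c l <= b l) by apply Rmin_l.
    set (E := exp (- (c l * xstar eps * eps))).
    assert (HE1 : E <= 1) by (apply exp_le_1; nra).
    assert (HE2 : 1 - c l * xstar eps * eps <= E) by apply exp_ineq1_le.
    apply Rle_trans with (c l); [|exact Hcb].
    apply Rmult_le_reg_r with (xstar eps + 1); [lra|].
    unfold Rdiv; rewrite Rmult_assoc, Rinv_l by lra.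
    assert ((1 - E) * xstar eps <= c l * xstar eps * eps * xstar eps)
      by (apply Rmult_le_compat_r; lra).
    assert (c l * xstar eps * E <= c l * xstar eps * 1) by (apply Rmult_le_compat_l; nra).
    assert (c l * xstar eps * eps * xstar eps <= c l) by nra.
    lra.
Qed.

Lemma DeltaBar_rstar_le eps :
  0 < eps ->
  DeltaBar M w eps (rstar w b beta eps)
  <= sumR M (fun l => w l / c l) * (exp (sqrt eps) * (1 + sqrt eps + eps)) + sumR M w.
Proof.
  intros Heps. pose proof (xstar_pos eps Heps) as Hx. pose proof (xstar_root eps Heps).
  pose proof (eps_xstar_le_sqrt eps Heps).
  unfold DeltaBar. rewrite Ssum_rstar. apply Rplus_le_compat_r.
  assert (Hterms : sumR M (fun l => w l * exp (- (rstar w b beta eps l * eps))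
                                     / rstar w b beta eps l)
                   <= sumR M (fun l => w l / c l) * / xstar eps).
  { rewrite <- sumR_mult_r. apply sumR_le; intros l Hl. unfold rstar.
    change (Rmin (b l) (beta * sqrt (w l))) with (c l).
    assert (Hc := cstar_pos l Hl). assert (Hwl := Hw l Hl).
    assert (HE : exp (- (c l * xstar eps * eps)) <= 1) by (apply exp_le_1; nra).
    replace (w l / c l * / xstar eps) with (w l / (c l * xstar eps) * 1) by (field; lra).
    replace (w l * exp (- (c l * xstar eps * eps)) / (c l * xstar eps))
      with (w l / (c l * xstar eps) * exp (- (c l * xstar eps * eps))) by (field; lra).
    apply Rmult_le_compat_l; [|exact HE].
    apply Rle_mult_inv_pos; [lra|nra]. }
  assert (HA : 0 <= sumR M (fun l => w l / c l)).
  { apply sumR_nonneg; intros l Hl.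
    apply Rle_mult_inv_pos; [left; apply Hw, Hl|apply cstar_pos, Hl]. }
  assert (Hinv : / xstar eps = eps * (xstar eps + 1)).
  { apply Rmult_eq_reg_l with (xstar eps); [|lra]. rewrite Rinv_r by lra.
    replace (xstar eps * (eps * (xstar eps + 1))) with (eps * (xstar eps * (xstar eps + 1)))
      by ring.
    symmetry; assumption. }
  assert (Hfactor : / xstar eps * (1 + xstar eps) = 1 + eps * xstar eps + eps).
  { replace (/ xstar eps * (1 + xstar eps)) with (/ xstar eps + 1) by (field; lra).
    rewrite Hinv; ring. }
  rewrite Rmult_assoc.
  eapply Rle_trans.
  { apply Rmult_le_compat_r; [|exact Hterms].
    apply Rmult_le_pos; [left; apply exp_pos|lra]. }
  replace (sumR M (fun l => w l / c l) * / xstar eps * (exp (eps * xstar eps) * (1 + xstar eps)))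
    with (sumR M (fun l => w l / c l) * (exp (eps * xstar eps) * (1 + eps * xstar eps + eps)))
    by (rewrite <- Hfactor; ring).
  apply Rmult_le_compat_l; [exact HA|].
  apply Rmult_le_compat; [left; apply exp_pos|nra|apply exp_le_compat|]; lra.
Qed.

End EnergyAdequate.

Theorem corollary1 (M : nat) (w b : nat -> R) (beta : R) (Dopt : R -> R)
  (HM : (1 <= M)%nat)
  (Hw : forall i, (i < M)%nat -> 0 < w i)
  (Hb : forall i, (i < M)%nat -> 0 < b i)
  (Hsumb : 1 <= sumR M b)
  (* beta^\star is the root in [0, max_l b_l / sqrt w_l] *)
  (Hbeta0 : 0 <= beta)
  (Hbeta1 : exists l, (l < M)%nat /\ beta <= b l / sqrt (w l))
  (Hbeta : sumR M (fun i => Rmin (b i) (beta * sqrt (w i))) = 1)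
  (* Dopt eps is the optimal (infimum) value of Problem 1 *)
  (HDopt : forall eps, 0 < eps -> is_inf (objective_values M w b eps) (Dopt eps)) :
  limit1_in (fun eps => Rabs (DeltaBar M w eps (rstar w b beta eps) - Dopt eps))
            (fun eps => 0 < eps) 0 0
  /\
  limit1_in Dopt (fun eps => 0 < eps)
            (sumR M (fun i => w i / Rmin (b i) (beta * sqrt (w i)) + w i)) 0.
Proof.
  assert (Hbeta_pos : 0 < beta) by exact (beta_pos_of_cstar_sum M w b beta Hb Hbeta0 Hbeta).
  change (fun i => w i / Rmin (b i) (beta * sqrt (w i)) + w i)
    with (fun i => w i / cstar w b beta i + w i).
  rewrite sumR_plus.
  set (A := sumR M (fun l => w l / cstar w b beta l)).
  assert (Hbounds : forall eps, 0 < eps ->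
            A + sumR M w <= Dopt eps /\ Dopt eps <= DeltaBar M w eps (rstar w b beta eps)
            /\ DeltaBar M w eps (rstar w b beta eps)
               <= A * (exp (sqrt eps) * (1 + sqrt eps + eps)) + sumR M w).
  { intros eps Heps. destruct (HDopt eps Heps) as [Hlower Hgreatest]. split; [|split].
    - apply Hgreatest. intros v [r [Hr ->]]. apply DeltaBar_feasible_ge; auto.
    - apply Hlower. exists (rstar w b beta eps).
      split; [apply rstar_feasible|]; auto.
    - apply DeltaBar_rstar_le; auto. }
  split; apply (limit1_in_squeeze _ _ _ _ _ (gap_vanishes A)); intros eps Heps;
    destruct (Hbounds eps Heps) as (H1 & H2 & H3).
  - rewrite Rminus_0_r, Rabs_Rabsolu, Rabs_right; lra.
  - rewrite Rabs_right; lra.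
Qed.
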